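(* Let $\mathfrak{A}$ and $\mathfrak{B}$ be weakly Connes amenable dual Banach algebras such that $\mathfrak{A}^2$ is $w^*$-dense in $\mathfrak{A}$ and $\mathfrak{B}^2$ is $w^*$-dense in $\mathfrak{B}$. Then the $\ell^1$-direct sum $\mathfrak{A}\oplus^1\mathfrak{B}$ is weakly Connes amenable.
   Context: A dual Banach algebra is a Banach algebra $\mathfrak{A}$ which is the dual of a Banach space $\mathfrak{A}_*$ and whose multiplication is separately $w^*$-continuous. $\mathfrak{A}^2$ denotes the linear span of the products $ab$, $a,b\in\mathfrak{A}$. $\mathfrak{A}\oplus^1\mathfrak{B}$ has norm $\|(a,b)\|=\|a\|+\|b\|$, coordinatewise operations, and predual $\mathfrak{A}_*\oplus^\infty\mathfrak{B}_*$ (with pairing $\langle(a,b),(\phi,\psi)\rangle=\langle a,\phi\rangle+\langle b,\psi\rangle$), which makes it a dual Banach algebra. A derivation $D:\mathfrak{C}\to F$ is a continuous linear map with $D(xy)=D(x)\cdot y+x\cdot D(y)$; inner if $D(x)=x\cdot f-f\cdot x$ for some $f\in F$. For a Banach bimodule $E$ over a dual Banach algebra $\mathfrak{C}$, $\sigma wc(E)$ is the set of $x\in E$ such that $c\mapsto c\cdot x$ and $c\mapsto x\cdot c$ are continuous from $(\mathfrak{C},w^* )$ to $(E,\sigma(E,E^* ))$; $j_{\mathfrak{C}}:\mathfrak{C}^*\to\sigma wc(\mathfrak{C})^*$ is the adjoint of the inclusion $\sigma wc(\mathfrak{C})\hookrightarrow\mathfrak{C}$. $\mathfrak{C}$ is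 weakly Connes amenable if for every derivation $D:\mathfrak{C}\to\mathfrak{C}^*$ such that $j_{\mathfrak{C}}\circ D:\mathfrak{C}\to\sigma wc(\mathfrak{C})^*$ is $w^*$-$w^*$ continuous, the derivation $j_{\mathfrak{C}}\circ D$ is inner. *)

(* abstract scalar field K : numFieldType; the theorem is
   instantiated with K = R[i] (complex numbers over a realType R). *)
From mathcomp Require Import all_boot all_order all_algebra.
Set Implicit Arguments. Unset Strict Implicit. Unset Printing Implicit Defensive.
Import Order.TTheory GRing.Theory Num.Theory.
Local Open Scope ring_scope.

Section Defs.
Variable K : numFieldType.

Definition is_norm (V : lmodType K) (n : V -> K) : Prop :=
  [/\ forall x, 0 <= n x,
      forall x, n x = 0 -> x = 0,
      forall (k : K) x, n (k *: x) = `|k| * n x &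
      forall x y, n (x + y) <= n x + n y].

Definition is_complete (V : lmodType K) (n : V -> K) : Prop :=
  forall u : nat -> V,
    (forall e, 0 < e -> exists N, forall p q, (N <= p)%N -> (N <= q)%N -> n (u p - u q) < e) ->
    exists l, forall e, 0 < e -> exists N, forall p, (N <= p)%N -> n (u p - l) < e.

Definition is_banach (V : lmodType K) (n : V -> K) : Prop :=
  is_norm n /\ is_complete n.

Definition is_cont_lin_on (V : lmodType K) (S : V -> Prop) (n : V -> K) (f : V -> K) : Prop :=
  (forall x y (k : K), S x -> S y -> f (x + k *: y) = f x + k * f y) /\
  exists M : K, forall x, S x -> `|f x| <= M * n x.

Definition is_cont_lin (V : lmodType K) (n : V -> K) (f : V -> K) : Prop :=
  is_cont_lin_on (fun _ => True) n f.

(* U is open in the weak (initial) topology on X induced by the family of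
   scalar functions (F i)_{i : I}, i.e. sigma(X, {F i}). *)
Definition weak_open (X I : Type) (F : I -> X -> K) (U : X -> Prop) : Prop :=
  forall x, U x -> exists (m : nat) (s : 'I_m -> I) (e : K), 0 < e /\
    forall y, (forall j, `|F (s j) y - F (s j) x| < e) -> U y.

Definition weak_cont (X Y I J : Type) (F : I -> X -> K) (G : J -> Y -> K)
  (f : X -> Y) : Prop :=
  forall U : Y -> Prop, weak_open G U -> weak_open F (fun x => U (f x)).

Section DBA.
Variables (A P : lmodType K) (nA : A -> K) (mul : A -> A -> A)
          (nP : P -> K) (pair : A -> P -> K).

Definition is_banach_algebra : Prop :=
  [/\ is_banach nA,
      forall a b c (k : K), mul (a + k *: b) c = mul a c + k *: mul b c,
      forall a b c (k : K), mul a (b + k *: c) = mul a b + k *: mul a c,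
      forall a b c, mul a (mul b c) = mul (mul a b) c &
      forall a b, nA (mul a b) <= nA a * nA b].

(* the w*-topology on A = (P)^*: sigma(A, P) *)
Definition wstar : P -> A -> K := fun phi a => pair a phi.

Definition is_dual_via : Prop :=
  [/\ is_banach nP,
      forall a b phi (k : K), pair (a + k *: b) phi = pair a phi + k * pair b phi,
      forall a phi psi (k : K), pair a (phi + k *: psi) = pair a phi + k * pair a psi,
      (* isometry: nA a = sup_{nP phi <= 1} |pair a phi| *)
      (forall a phi, `|pair a phi| <= nA a * nP phi) /\
      (forall a e, 0 < e -> exists phi, nP phi <= 1 /\ nA a - e < `|pair a phi|) &
      forall f : P -> K, is_cont_lin nP f -> exists a, forall phi, pair a phi = f phi].

Definition is_dual_banach_algebra : Prop :=
  [/\ is_banach_algebra, is_dual_via &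
      forall a, weak_cont wstar wstar (mul a) /\
                weak_cont wstar wstar (fun b => mul b a)].

(* the weak topology sigma(A, A^* ) *)
Definition weakA : {f : A -> K | is_cont_lin nA f} -> A -> K :=
  fun f x => sval f x.

Definition sigma_wc (x : A) : Prop :=
  weak_cont wstar weakA (fun c => mul c x) /\ weak_cont wstar weakA (fun c => mul x c).

Definition jA (f : A -> K) : {x : A | sigma_wc x} -> K := fun x => f (sval x).

(* weak* topology on sigma wc(A)^* *)
Definition wstar_swc : {x : A | sigma_wc x} -> ({x : A | sigma_wc x} -> K) -> K :=
  fun x g => g x.

(* D : A -> A^* (elements of A^* represented as functions A -> K) is a
   (continuous) derivation; module actions on A^*:
   (f . c)(z) = f (c z), (c . f)(z) = f (z c). *)
Definition is_derivation_dual (D : A -> A -> K) : Prop :=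
  [/\ forall c, is_cont_lin nA (D c),
      forall c c' (k : K) x, D (c + k *: c') x = D c x + k * D c' x,
      exists M : K, forall c x, `|D c x| <= M * nA c * nA x &
      forall c c' x, D (mul c c') x = D c (mul c' x) + D c' (mul x c)].

Definition weakly_connes_amenable : Prop :=
  is_dual_banach_algebra /\
  forall D : A -> A -> K, is_derivation_dual D ->
    weak_cont wstar wstar_swc (fun c => jA (D c)) ->
    (* j_A o D is inner: j_A(D c) = c . g - g . c for some g in sigma wc(A)^*
       (g represented by any function on A whose restriction is that element) *)
    exists g : A -> K, is_cont_lin_on sigma_wc nA g /\
      forall c x, sigma_wc x -> D c x = g (mul x c) - g (mul c x).

Definition square_wstar_dense : Prop :=
  forall (U : A -> Prop) a, weak_open wstar U -> U a ->
    exists (m : nat) (f g : 'I_m -> A), U (\sum_(i < m) mul (f i) (g i)).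

End DBA.
End Defs.

(* A derivation D of A ⊕ B into its dual splits into four blocks D (a, 0) (x, 0),
   D (0, b) (0, y), D (a, 0) (0, y) and D (0, b) (x, 0). The two diagonal blocks are
   derivations of A and B which stay w*-continuous after composition with j, so weak
   Connes amenability makes them inner, and the sum of the two implementing functionals
   implements D. A cross term a |-> D (a, 0) (0, y), with y in σwc(B), is w*-continuous
   and additive, and the derivation identity makes it vanish on products a a'; hence it
   vanishes on A^2 and, by w*-density, on all of A. That A ⊕¹ B is a dual Banach algebra
   with predual A_* ⊕^∞ B_* is routine, except that norming functionals for the sum need
   the phases of the two summands aligned. *)

From mathcomp Require Import all_boot all_order all_algebra.
From mathcomp Require Import reals complex.
Import Order.TTheory GRing.Theory Num.Theory.
Set Implicit Arguments. Unset Strict Implicit. Unset Printing Implicit Defensive.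
Local Open Scope ring_scope.

Section WeakTopology.
Variables (K : numFieldType) (X I : Type) (F : I -> X -> K).

Definition weak_nbhd (x : X) (P : X -> Prop) : Prop :=
  exists m (s : 'I_m -> I) (e : K), 0 < e /\
    forall y, (forall j, `|F (s j) y - F (s j) x| < e) -> P y.

Lemma weak_nbhd_mono x (P Q : X -> Prop) :
  weak_nbhd x P -> (forall y, P y -> Q y) -> weak_nbhd x Q.
Proof. by move=> [m [s [e [e0 HP]]]] PQ; exists m, s, e; split => // y /HP/PQ. Qed.

Lemma weak_nbhdT x : weak_nbhd x (fun _ => True).
Proof. by exists 0%N, (fun j : 'I_0 => False_rect I (notF (ltn_ord j))), 1. Qed.

Lemma weak_nbhdI x (P Q : X -> Prop) :
  weak_nbhd x P -> weak_nbhd x Q -> weak_nbhd x (fun y => P y /\ Q y).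
Proof.
case=> [m1 [s1 [e1 [e1_gt0 HP]]]] [m2 [s2 [e2 [e2_gt0 HQ]]]].
have e12 : e1 >=< e2 by rewrite real_comparable ?gtr0_real.
exists (m1 + m2)%N, (fun k => match split k with inl i => s1 i | inr i => s2 i end).
exists (Num.min e1 e2).
split=> [|y Hy]; first by rewrite comparable_lt_min // e1_gt0.
split.
  apply: HP => j; have := Hy (unsplit (inl j)).
  by rewrite unsplitK comparable_lt_min // => /andP[].
apply: HQ => j; have := Hy (unsplit (inr j)).
by rewrite unsplitK comparable_lt_min // => /andP[].
Qed.

Lemma weak_nbhd_big x m (P : 'I_m -> X -> Prop) :
  (forall j, weak_nbhd x (P j)) -> weak_nbhd x (fun y => forall j, P j y).
Proof.
move=> HP; suff /(_ m (leqnn m)) : forall n, (n <= m)%N ->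
    weak_nbhd x (fun y => forall j : 'I_m, (j < n)%N -> P j y).
  by move/weak_nbhd_mono; apply=> y Py j; apply: Py.
elim=> [_|n IHn lt_nm].
  by apply: weak_nbhd_mono (weak_nbhdT x) _ => y _ j.
apply: weak_nbhd_mono (weak_nbhdI (IHn (ltnW lt_nm)) (HP (Ordinal lt_nm))) _.
move=> y [Py Pn] j; rewrite ltnS leq_eqVlt => /predU1P[jn|]; last exact: Py.
by rewrite (_ : j = Ordinal lt_nm) //; apply: val_inj.
Qed.

Definition weak_cont_at (h : X -> K) (x : X) : Prop :=
  forall e, 0 < e -> weak_nbhd x (fun y => `|h y - h x| < e).

Lemma weak_cont_at_coord j x : weak_cont_at (F j) x.
Proof. by move=> e e_gt0; exists 1%N, (fun _ => j), e; split=> // y /(_ ord0). Qed.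

Lemma eq_weak_cont_at (h1 h2 : X -> K) x :
  h1 =1 h2 -> weak_cont_at h1 x -> weak_cont_at h2 x.
Proof.
move=> h12 h1c e e_gt0.
by apply: weak_nbhd_mono (h1c e e_gt0) _ => y; rewrite !h12.
Qed.

Lemma weak_cont_atD (h1 h2 : X -> K) x : weak_cont_at h1 x -> weak_cont_at h2 x ->
  weak_cont_at (fun y => h1 y + h2 y) x.
Proof.
move=> h1c h2c e e_gt0; have e2_gt0 : 0 < e / 2 by rewrite divr_gt0.
apply: weak_nbhd_mono (weak_nbhdI (h1c _ e2_gt0) (h2c _ e2_gt0)) _ => y [l1 l2].
rewrite opprD addrACA [e]splitr (le_lt_trans (ler_normD _ _)) //; exact: ltrD.
Qed.

Lemma weak_open_ball (h : X -> K) a e :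
  (forall y, weak_cont_at h y) -> weak_open F (fun z => `|h z - h a| < e).
Proof.
move=> hc y hy; have d_gt0 : 0 < e - `|h y - h a| by rewrite subr_gt0.
apply: weak_nbhd_mono (hc y _ d_gt0) _ => z hz.
rewrite -(subrK (h y) (h z)) -addrA (le_lt_trans (ler_normD _ _)) //.
by rewrite -ltrBrDr.
Qed.

End WeakTopology.

Section WeakContinuity.
Variables (K : numFieldType) (X Y I J : Type) (F : I -> X -> K) (G : J -> Y -> K).

Lemma weak_contP (f : X -> Y) :
  weak_cont F G f <-> (forall j x, weak_cont_at F (fun y => G j (f y)) x).
Proof.
split=> [fc j x e e_gt0 | fc U U_open x Ufx].
  have := fc _ (weak_open_ball (a := f x) (e := e) (weak_cont_at_coord G j)) x.
  by rewrite subrr normr0; apply.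
have [m [s [e [e_gt0 He]]]] := U_open _ Ufx.
by apply: weak_nbhd_mono (weak_nbhd_big (fun k => fc (s k) x e e_gt0)) _ => y /He.
Qed.

Lemma weak_cont_at_comp (f : X -> Y) (h : Y -> K) x :
  (forall j, weak_cont_at F (fun y => G j (f y)) x) -> weak_cont_at G h (f x) ->
  weak_cont_at F (fun y => h (f y)) x.
Proof.
move=> fc hc e /hc [m [s [d [d_gt0 Hd]]]].
by apply: weak_nbhd_mono (weak_nbhd_big (fun k => fc (s k) d d_gt0)) _ => y /Hd.
Qed.

End WeakContinuity.

Section LinearForms.
Variables (K : numFieldType) (V : lmodType K).

Lemma linear_map0 (W : lmodType K) (g : V -> W) :
  (forall x y (k : K), g (x + k *: y) = g x + k *: g y) -> g 0 = 0.
Proof.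
move=> g_lin; have g00 := g_lin 0 0 1; rewrite scale1r addr0 scale1r in g00.
by apply: (addrI (g 0)); rewrite addr0 -g00.
Qed.

Lemma linear_form0 (f : V -> K) :
  (forall x y (k : K), f (x + k *: y) = f x + k * f y) -> f 0 = 0.
Proof. exact: (@linear_map0 K^o). Qed.

Lemma linear_formD (f : V -> K) :
  (forall x y (k : K), f (x + k *: y) = f x + k * f y) -> {morph f : x y / x + y}.
Proof. by move=> f_lin x y; have := f_lin x y 1; rewrite scale1r mul1r. Qed.

Lemma linear_formZ (f : V -> K) :
  (forall x y (k : K), f (x + k *: y) = f x + k * f y) -> forall k y, f (k *: y) = k * f y.
Proof. by move=> f_lin k y; rewrite -[_ *: y]add0r f_lin (linear_form0 f_lin) !add0r. Qed.

Lemma cont_lin_linear (n : V -> K) (f : V -> K) : is_cont_lin n f ->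
  forall x y (k : K), f (x + k *: y) = f x + k * f y.
Proof. by case=> f_lin _ x y k; apply: f_lin. Qed.

Lemma norm0 (n : V -> K) : is_norm n -> n 0 = 0.
Proof. by case=> _ _ nZ _; rewrite -(scale0r 0) nZ normr0 mul0r. Qed.

End LinearForms.

Section PairLinear.
Variables (K : numFieldType) (V W : lmodType K).

Lemma pair_split (x : V * W) : x = (x.1, 0) + (0, x.2).
Proof. by case: x => a b; congr pair; rewrite /= ?addr0 ?add0r. Qed.

Lemma pair_inlD (x y : V) : (x + y, 0) = (x, 0) + (y, 0) :> V * W.
Proof. by congr pair; rewrite /= addr0. Qed.

Lemma pair_inrD (x y : W) : (0, x + y) = (0, x) + (0, y) :> V * W.
Proof. by congr pair; rewrite /= addr0. Qed.

Lemma pair_inl_lin (x y : V) (k : K) : (x + k *: y, 0) = (x, 0) + k *: (y, 0) :> V * W.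
Proof. by congr pair; rewrite /= scaler0 addr0. Qed.

Lemma pair_inr_lin (x y : W) (k : K) : (0, x + k *: y) = (0, x) + k *: (0, y) :> V * W.
Proof. by congr pair; rewrite /= scaler0 addr0. Qed.

End PairLinear.

Lemma ler_normr_absM (K : numDomainType) (M r s : K) : 0 <= r -> `|s| <= M * r -> `|s| <= `|M| * r.
Proof.
move=> r_ge0 sM; have Mr_real : M * r \is Num.real.
  by rewrite ger0_real // (le_trans _ sM).
apply: le_trans sM _.
by rewrite (le_trans (real_ler_norm Mr_real)) // normrM (ger0_norm r_ge0).
Qed.

Section ContLinPair.
Variables (K : numFieldType) (A B : lmodType K) (nA : A -> K) (nB : B -> K).
Variable n : A * B -> K.

Lemma cont_lin_inl (f : A * B -> K) : (forall a, n (a, 0) = nA a) ->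
  is_cont_lin n f -> is_cont_lin nA (fun a => f (a, 0)).
Proof.
move=> nE [f_lin [M fM]]; split=> [x y k _ _|]; first by rewrite pair_inl_lin f_lin.
by exists M => x _; rewrite -nE; apply: fM.
Qed.

Lemma cont_lin_inr (f : A * B -> K) : (forall b, n (0, b) = nB b) ->
  is_cont_lin n f -> is_cont_lin nB (fun b => f (0, b)).
Proof.
move=> nE [f_lin [M fM]]; split=> [x y k _ _|]; first by rewrite pair_inr_lin f_lin.
by exists M => x _; rewrite -nE; apply: fM.
Qed.

Lemma cont_lin_fst (f : A -> K) : (forall a, 0 <= nA a) -> (forall x, nA x.1 <= n x) ->
  is_cont_lin nA f -> is_cont_lin n (fun x => f x.1).
Proof.
move=> nA_ge0 n1 [f_lin [M fM]]; split=> [x y k _ _|]; first exact: f_lin.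
exists `|M| => x _; rewrite (le_trans (ler_normr_absM (nA_ge0 _) (fM _ I))) //.
exact: ler_wpM2l.
Qed.

Lemma cont_lin_snd (f : B -> K) : (forall b, 0 <= nB b) -> (forall x, nB x.2 <= n x) ->
  is_cont_lin nB f -> is_cont_lin n (fun x => f x.2).
Proof.
move=> nB_ge0 n2 [f_lin [M fM]]; split=> [x y k _ _|]; first exact: f_lin.
exists `|M| => x _; rewrite (le_trans (ler_normr_absM (nB_ge0 _) (fM _ I))) //.
exact: ler_wpM2l.
Qed.

Lemma is_complete_pair : is_complete nA -> is_complete nB ->
  (forall x, nA x.1 <= n x) -> (forall x, nB x.2 <= n x) ->
  (forall x, n x <= nA x.1 + nB x.2) -> is_complete n.
Proof.
move=> nA_complete nB_complete n1 n2 n_le u u_cauchy.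
have [l1 u1_cvg] := nA_complete (fun p => (u p).1) (fun e e_gt0 =>
  let: ex_intro N HN := u_cauchy e e_gt0 in
  ex_intro _ N (fun p q hp hq => le_lt_trans (n1 _) (HN p q hp hq))).
have [l2 u2_cvg] := nB_complete (fun p => (u p).2) (fun e e_gt0 =>
  let: ex_intro N HN := u_cauchy e e_gt0 in
  ex_intro _ N (fun p q hp hq => le_lt_trans (n2 _) (HN p q hp hq))).
exists (l1, l2) => e e_gt0; have e2_gt0 : 0 < e / 2 by rewrite divr_gt0.
have [N1 HN1] := u1_cvg _ e2_gt0; have [N2 HN2] := u2_cvg _ e2_gt0.
exists (maxn N1 N2) => p; rewrite geq_max => /andP[p1 p2].
by rewrite (le_lt_trans (n_le _)) // [e]splitr ltrD ?HN1 ?HN2.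
Qed.

End ContLinPair.

Lemma ge0_comparable (K : numDomainType) (a b : K) : 0 <= a -> 0 <= b -> a >=< b.
Proof. by move=> a_ge0 b_ge0; rewrite real_comparable ?ger0_real. Qed.

Section ProductNorm.
Variables (K : numFieldType) (A B : lmodType K) (nA : A -> K) (nB : B -> K).
Hypotheses (nA_norm : is_norm nA) (nB_norm : is_norm nB).

Let nA_ge0 a : 0 <= nA a. Proof. by case: nA_norm. Qed.
Let nB_ge0 b : 0 <= nB b. Proof. by case: nB_norm. Qed.
Let cmp x : nA x.1 >=< nB x.2. Proof. exact: ge0_comparable (nA_ge0 _) (nB_ge0 _). Qed.

Lemma is_norm_sum : is_norm (fun x : A * B => nA x.1 + nB x.2).
Proof.
case: nA_norm nB_norm => [_ nA_def nAZ nAD] [_ nB_def nBZ nBD]; split=> [x|x|k x|x y] /=.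
- exact: addr_ge0.
- move/eqP; rewrite paddr_eq0 // => /andP[/eqP/nA_def x1 /eqP/nB_def x2].
  by rewrite [x]pair_split x1 x2 addr0.
- by rewrite nAZ nBZ mulrDr.
- by rewrite addrACA lerD.
Qed.

Lemma is_norm_max : is_norm (fun x : A * B => Num.max (nA x.1) (nB x.2)).
Proof.
case: nA_norm nB_norm => [_ nA_def nAZ nAD] [_ nB_def nBZ nBD]; split=> [x|x|k x|x y] /=.
- by rewrite (comparable_le_max _ (cmp x)) nA_ge0.
- move=> x0; have /andP[x1 x2] : (nA x.1 <= 0) && (nB x.2 <= 0).
    by rewrite -(comparable_ge_max _ (cmp x)) x0.
  have /nA_def x1_0 : nA x.1 = 0 by apply/eqP; rewrite eq_le x1 nA_ge0.
  have /nB_def x2_0 : nB x.2 = 0 by apply/eqP; rewrite eq_le x2 nB_ge0.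
  by rewrite [x]pair_split x1_0 x2_0 addr0.
- by rewrite nAZ nBZ maxr_pMr.
- have le_max1 z : nA z.1 <= Num.max (nA z.1) (nB z.2).
    by rewrite (comparable_le_max _ (cmp z)) lexx.
  have le_max2 z : nB z.2 <= Num.max (nA z.1) (nB z.2).
    by rewrite (comparable_le_max _ (cmp z)) lexx orbT.
  rewrite (comparable_ge_max _ (cmp (x + y))); apply/andP; split.
    by rewrite (le_trans (nAD _ _)) // lerD.
  by rewrite (le_trans (nBD _ _)) // lerD.
Qed.

End ProductNorm.

Section ProductBanach.
Variables (K : numFieldType) (A B : lmodType K) (nA : A -> K) (nB : B -> K).

Lemma is_banach_sum : is_banach nA -> is_banach nB ->
  is_banach (fun x : A * B => nA x.1 + nB x.2).
Proof.
move=> [nA_norm nA_complete] [nB_norm nB_complete]; split; first exact: is_norm_sum.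
have [[nA_ge0 _ _ _] [nB_ge0 _ _ _]] := (nA_norm, nB_norm).
apply: is_complete_pair nA_complete nB_complete _ _ _ => x //=.
  by rewrite lerDl.
by rewrite lerDr.
Qed.

Lemma is_banach_max : is_banach nA -> is_banach nB ->
  is_banach (fun x : A * B => Num.max (nA x.1) (nB x.2)).
Proof.
move=> [nA_norm nA_complete] [nB_norm nB_complete]; split; first exact: is_norm_max.
have [[nA_ge0 _ _ _] [nB_ge0 _ _ _]] := (nA_norm, nB_norm).
have cmp x : nA x.1 >=< nB x.2 by exact: ge0_comparable.
apply: is_complete_pair nA_complete nB_complete _ _ _ => x /=.
- by rewrite (comparable_le_max _ (cmp x)) lexx.
- by rewrite (comparable_le_max _ (cmp x)) lexx orbT.
- by rewrite (comparable_ge_max _ (cmp x)) lerDl lerDr nA_ge0 nB_ge0.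
Qed.

Variables (mA : A -> A -> A) (mB : B -> B -> B).

Lemma is_banach_algebra_sum : is_banach_algebra nA mA -> is_banach_algebra nB mB ->
  is_banach_algebra (fun x : A * B => nA x.1 + nB x.2)
    (fun x y : A * B => (mA x.1 y.1, mB x.2 y.2)).
Proof.
move=> [nA_banach mADl mADr mAA mAM] [nB_banach mBDl mBDr mBA mBM].
split=> [|x y z k|x y z k|x y z|x y] /=.
- exact: is_banach_sum.
- by rewrite mADl mBDl.
- by rewrite mADr mBDr.
- by rewrite mAA mBA.
- have [[[nA_ge0 _ _ _] _] [[nB_ge0 _ _ _] _]] := (nA_banach, nB_banach).
  rewrite (le_trans (lerD (mAM _ _) (mBM _ _))) // mulrDl !mulrDr.
  by rewrite -addrA lerD2l addrA lerDr addr_ge0 ?mulr_ge0.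
Qed.

End ProductBanach.

Section ProductDual.
Variable K : numFieldType.
Hypothesis phase : forall z : K, exists2 k, `|k| = 1 & k * z = `|z|.
Variables (A PA B PB : lmodType K) (nA : A -> K) (nPA : PA -> K) (pA : A -> PA -> K)
  (nB : B -> K) (nPB : PB -> K) (pB : B -> PB -> K).
Hypotheses (nA_ge0 : forall a, 0 <= nA a) (nB_ge0 : forall b, 0 <= nB b).
Hypotheses (dA : is_dual_via nA nPA pA) (dB : is_dual_via nB nPB pB).

Local Notation nS := (fun x : A * B => nA x.1 + nB x.2).
Local Notation nP := (fun p : PA * PB => Num.max (nPA p.1) (nPB p.2)).
Local Notation pS := (fun (x : A * B) (p : PA * PB) => pA x.1 p.1 + pB x.2 p.2).

Let nPA_norm : is_norm nPA. Proof. by case: dA => [[]]. Qed.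
Let nPB_norm : is_norm nPB. Proof. by case: dB => [[]]. Qed.
Let nPA_ge0 phi : 0 <= nPA phi. Proof. by case: nPA_norm. Qed.
Let nPB_ge0 psi : 0 <= nPB psi. Proof. by case: nPB_norm. Qed.
Let cmp p : nPA p.1 >=< nPB p.2. Proof. exact: ge0_comparable (nPA_ge0 _) (nPB_ge0 _). Qed.

Lemma dual_sum_bound a p : `|pS a p| <= nS a * nP p.
Proof.
case: dA dB => [_ _ _ [pA_bound _] _] [_ _ _ [pB_bound _] _].
rewrite (le_trans (ler_normD _ _)) // mulrDl lerD //.
  rewrite (le_trans (pA_bound _ _)) // ler_wpM2l //.
  by rewrite (comparable_le_max _ (cmp p)) lexx.
rewrite (le_trans (pB_bound _ _)) // ler_wpM2l //.
by rewrite (comparable_le_max _ (cmp p)) lexx orbT.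
Qed.

Lemma dual_sum_norming a e : 0 < e -> exists p, nP p <= 1 /\ nS a - e < `|pS a p|.
Proof.
case: dA dB => [_ _ pAr [_ pA_norming] _] [_ _ pBr [_ pB_norming] _] e_gt0.
have e2_gt0 : 0 < e / 2 by rewrite divr_gt0.
have [phi [phi_le1 phi_norming]] := pA_norming a.1 _ e2_gt0.
have [psi [psi_le1 psi_norming]] := pB_norming a.2 _ e2_gt0.
have [kA kA1 kAE] := phase (pA a.1 phi).
have [kB kB1 kBE] := phase (pB a.2 psi).
exists (kA *: phi, kB *: psi); split.
  case: nPA_norm nPB_norm => [_ _ nPAZ _] [_ _ nPBZ _].
  by rewrite (comparable_ge_max _ (cmp _)) /= nPAZ nPBZ kA1 kB1 !mul1r phi_le1.
rewrite /= (linear_formZ (pAr a.1)) (linear_formZ (pBr a.2)) kAE kBE.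
by rewrite ger0_norm ?addr_ge0 // [e]splitr opprD addrACA ltrD.
Qed.

Lemma dual_sum_surjective f : is_cont_lin nP f -> exists a, forall p, pS a p = f p.
Proof.
case: dA dB => [_ _ _ _ pA_onto] [_ _ _ _ pB_onto] f_cl.
have nP_inl phi : nP (phi, 0) = nPA phi by rewrite /= (norm0 nPB_norm) max_l ?nPA_ge0.
have nP_inr psi : nP (0, psi) = nPB psi by rewrite /= (norm0 nPA_norm) max_r ?nPB_ge0.
have [a1 fa1] := pA_onto _ (cont_lin_inl nP_inl f_cl).
have [a2 fa2] := pB_onto _ (cont_lin_inr nP_inr f_cl).
exists (a1, a2) => p /=; rewrite fa1 fa2 [in RHS](pair_split p).
by rewrite (linear_formD (cont_lin_linear f_cl)).
Qed.

Lemma is_dual_via_sum : is_dual_via nS nP pS.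
Proof.
case: dA dB => [nPA_banach pAl pAr _ _] [nPB_banach pBl pBr _ _].
split=> [|a b p k|a p q k||].
- exact: is_banach_max.
- by rewrite /= pAl pBl mulrDr addrACA.
- by rewrite /= pAr pBr mulrDr addrACA.
- by split; [exact: dual_sum_bound | exact: dual_sum_norming].
- exact: dual_sum_surjective.
Qed.

End ProductDual.

Section DualBanachAlgebraFacts.
Variables (K : numFieldType) (A P : lmodType K) (nA : A -> K) (mA : A -> A -> A).
Variables (nP : P -> K) (pA : A -> P -> K).
Hypothesis hA : is_dual_banach_algebra nA mA nP pA.

Lemma dba_norm_ge0 a : 0 <= nA a.
Proof. by case: hA => [[[[]]]]. Qed.

Lemma dba_norm0 : nA 0 = 0.
Proof. by case: hA => [[[]]] /norm0. Qed.

Lemma dba_mul0l a : mA 0 a = 0.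
Proof. by case: hA => [[_ mADl _ _ _] _ _]; apply: (linear_map0 (g := mA^~ a)). Qed.

Lemma dba_mul0r a : mA a 0 = 0.
Proof. by case: hA => [[_ _ mADr _ _] _ _]; apply: linear_map0. Qed.

Lemma dba_pair0l phi : pA 0 phi = 0.
Proof. by case: hA => [_ [_ pAl _ _ _] _]; apply: (linear_form0 (f := pA^~ phi)). Qed.

Lemma dba_pair0r a : pA a 0 = 0.
Proof. by case: hA => [_ [_ _ pAr _ _] _]; apply: linear_form0. Qed.

End DualBanachAlgebraFacts.

Section ProductWstar.
Variables (K : numFieldType) (A PA B PB : lmodType K).
Variables (pA : A -> PA -> K) (pB : B -> PB -> K).
Hypotheses (pA0l : forall phi, pA 0 phi = 0) (pA0r : forall a, pA a 0 = 0).
Hypotheses (pB0l : forall psi, pB 0 psi = 0) (pB0r : forall b, pB b 0 = 0).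

Local Notation pS := (fun (x : A * B) (p : PA * PB) => pA x.1 p.1 + pB x.2 p.2).

Lemma wstar_cont_at_fst (h : A -> K) (x : A * B) :
  weak_cont_at (wstar pA) h x.1 -> weak_cont_at (wstar pS) (fun y => h y.1) x.
Proof.
apply: weak_cont_at_comp => phi.
apply: eq_weak_cont_at (weak_cont_at_coord _ (phi, 0) x) => y.
by rewrite /wstar /= pB0r addr0.
Qed.

Lemma wstar_cont_at_snd (h : B -> K) (x : A * B) :
  weak_cont_at (wstar pB) h x.2 -> weak_cont_at (wstar pS) (fun y => h y.2) x.
Proof.
apply: weak_cont_at_comp => psi.
apply: eq_weak_cont_at (weak_cont_at_coord _ (0, psi) x) => y.
by rewrite /wstar /= pA0r add0r.
Qed.

Lemma wstar_cont_at_inl (h : A * B -> K) (a : A) :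
  weak_cont_at (wstar pS) h (a, 0) -> weak_cont_at (wstar pA) (fun y => h (y, 0)) a.
Proof.
apply: weak_cont_at_comp => p.
apply: eq_weak_cont_at (weak_cont_at_coord _ p.1 a) => y.
by rewrite /wstar /= pB0l addr0.
Qed.

Lemma wstar_cont_at_inr (h : A * B -> K) (b : B) :
  weak_cont_at (wstar pS) h (0, b) -> weak_cont_at (wstar pB) (fun y => h (0, y)) b.
Proof.
apply: weak_cont_at_comp => p.
apply: eq_weak_cont_at (weak_cont_at_coord _ p.2 b) => y.
by rewrite /wstar /= pA0l add0r.
Qed.

Lemma wstar_cont_pair (fA : A -> A) (fB : B -> B) :
  weak_cont (wstar pA) (wstar pA) fA -> weak_cont (wstar pB) (wstar pB) fB ->
  weak_cont (wstar pS) (wstar pS) (fun y => (fA y.1, fB y.2)).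
Proof.
move=> /weak_contP fA_cont /weak_contP fB_cont; apply/weak_contP => p x.
apply: weak_cont_atD.
  exact: (wstar_cont_at_fst (h := fun y => pA (fA y) p.1) (fA_cont p.1 x.1)).
exact: (wstar_cont_at_snd (h := fun y => pB (fB y) p.2) (fB_cont p.2 x.2)).
Qed.

End ProductWstar.

Section ProductDualBanachAlgebra.
Variable K : numFieldType.
Hypothesis phase : forall z : K, exists2 k, `|k| = 1 & k * z = `|z|.
Variables (A PA B PB : lmodType K) (nA : A -> K) (mA : A -> A -> A) (nPA : PA -> K)
  (pA : A -> PA -> K) (nB : B -> K) (mB : B -> B -> B) (nPB : PB -> K) (pB : B -> PB -> K).

Lemma is_dual_banach_algebra_sum :
  is_dual_banach_algebra nA mA nPA pA -> is_dual_banach_algebra nB mB nPB pB ->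
  is_dual_banach_algebra (fun x : A * B => nA x.1 + nB x.2)
    (fun x y : A * B => (mA x.1 y.1, mB x.2 y.2))
    (fun p : PA * PB => Num.max (nPA p.1) (nPB p.2))
    (fun (x : A * B) (p : PA * PB) => pA x.1 p.1 + pB x.2 p.2).
Proof.
move=> hA hB; case: (hA) (hB) => [bA dA mA_cont] [bB dB mB_cont].
have wstar_cont := wstar_cont_pair (dba_pair0r hA) (dba_pair0r hB).
split; first exact: is_banach_algebra_sum.
  exact (is_dual_via_sum phase (dba_norm_ge0 hA) (dba_norm_ge0 hB) dA dB).
move=> x; have [[lA rA] [lB rB]] := (mA_cont x.1, mB_cont x.2).
by split; [exact: wstar_cont lA lB | exact: wstar_cont rA rB].
Qed.

End ProductDualBanachAlgebra.

Lemma wstar_dense_square_eq0 (K : numFieldType) (A P : lmodType K) (mA : A -> A -> A)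
    (pA : A -> P -> K) (h : A -> K) :
  square_wstar_dense mA pA -> (forall a, weak_cont_at (wstar pA) h a) ->
  {morph h : x y / x + y} -> (forall a b, h (mA a b) = 0) -> forall a, h a = 0.
Proof.
move=> dense h_cont hD h_mul a; apply/eqP/negPn/negP => ha_neq0.
have h0 : h 0 = 0 by apply: (addrI (h 0)); rewrite -hD !addr0.
have h_span m (f g : 'I_m -> A) : h (\sum_(i < m) mA (f i) (g i)) = 0.
  by apply: (big_ind (fun s => h s = 0)) => // x y hx hy; rewrite hD hx hy addr0.
have [|m [f [g]]] := dense _ a (weak_open_ball (a := a) (e := `|h a|) h_cont).
  by rewrite subrr normr0 normr_gt0.
by rewrite h_span sub0r normrN ltxx.
Qed.

Section DerivationOnSum.
Variables (K : numFieldType) (A PA B PB : lmodType K).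
Variables (nA : A -> K) (mA : A -> A -> A) (nPA : PA -> K) (pA : A -> PA -> K).
Variables (nB : B -> K) (mB : B -> B -> B) (nPB : PB -> K) (pB : B -> PB -> K).
Hypotheses (hA : is_dual_banach_algebra nA mA nPA pA).
Hypotheses (hB : is_dual_banach_algebra nB mB nPB pB).

Local Notation nS := (fun x : A * B => nA x.1 + nB x.2).
Local Notation mS := (fun x y : A * B => (mA x.1 y.1, mB x.2 y.2)).
Local Notation pS := (fun (x : A * B) (p : PA * PB) => pA x.1 p.1 + pB x.2 p.2).

Let nS_inl a : nA a + nB 0 = nA a. Proof. by rewrite (dba_norm0 hB) addr0. Qed.
Let nS_inr b : nA 0 + nB b = nB b. Proof. by rewrite (dba_norm0 hA) add0r. Qed.
Let nS_fst (x : A * B) : nA x.1 <= nA x.1 + nB x.2.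
Proof. by rewrite lerDl (dba_norm_ge0 hB). Qed.
Let nS_snd (x : A * B) : nB x.2 <= nA x.1 + nB x.2.
Proof. by rewrite lerDr (dba_norm_ge0 hA). Qed.

Lemma sigma_wc_inl a : sigma_wc nA mA pA a -> sigma_wc nS mS pS (a, 0).
Proof.
case=> /weak_contP la /weak_contP ra; split; apply/weak_contP => f c;
  have fA := cont_lin_inl nS_inl (svalP f).
  apply: (eq_weak_cont_at (h1 := fun y => sval f (mA y.1 a, 0))).
    by move=> y; rewrite /weakA /= (dba_mul0r hB).
  exact (wstar_cont_at_fst (dba_pair0r hB) (la (exist _ _ fA) c.1)).
apply: (eq_weak_cont_at (h1 := fun y => sval f (mA a y.1, 0))).
  by move=> y; rewrite /weakA /= (dba_mul0l hB).
exact (wstar_cont_at_fst (dba_pair0r hB) (ra (exist _ _ fA) c.1)).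
Qed.

Lemma sigma_wc_inr b : sigma_wc nB mB pB b -> sigma_wc nS mS pS (0, b).
Proof.
case=> /weak_contP lb /weak_contP rb; split; apply/weak_contP => f c;
  have fB := cont_lin_inr nS_inr (svalP f).
  apply: (eq_weak_cont_at (h1 := fun y => sval f (0, mB y.2 b))).
    by move=> y; rewrite /weakA /= (dba_mul0r hA).
  exact (wstar_cont_at_snd (dba_pair0r hA) (lb (exist _ _ fB) c.2)).
apply: (eq_weak_cont_at (h1 := fun y => sval f (0, mB b y.2))).
  by move=> y; rewrite /weakA /= (dba_mul0l hA).
exact (wstar_cont_at_snd (dba_pair0r hA) (rb (exist _ _ fB) c.2)).
Qed.

Lemma sigma_wc_fst x : sigma_wc nS mS pS x -> sigma_wc nA mA pA x.1.
Proof.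
case=> /weak_contP l /weak_contP r; split; apply/weak_contP => f c;
  have fS := cont_lin_fst (dba_norm_ge0 hA) nS_fst (svalP f).
  exact (wstar_cont_at_inl (dba_pair0l hB) (l (exist _ _ fS) (c, 0))).
exact (wstar_cont_at_inl (dba_pair0l hB) (r (exist _ _ fS) (c, 0))).
Qed.

Lemma sigma_wc_snd x : sigma_wc nS mS pS x -> sigma_wc nB mB pB x.2.
Proof.
case=> /weak_contP l /weak_contP r; split; apply/weak_contP => f c;
  have fS := cont_lin_snd (dba_norm_ge0 hB) nS_snd (svalP f).
  exact (wstar_cont_at_inr (dba_pair0l hA) (l (exist _ _ fS) (0, c))).
exact (wstar_cont_at_inr (dba_pair0l hA) (r (exist _ _ fS) (0, c))).
Qed.

Lemma cont_lin_on_sigma_wc_sum (gA : A -> K) (gB : B -> K) :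
  is_cont_lin_on (sigma_wc nA mA pA) nA gA -> is_cont_lin_on (sigma_wc nB mB pB) nB gB ->
  is_cont_lin_on (sigma_wc nS mS pS) nS (fun y => gA y.1 + gB y.2).
Proof.
move=> [gA_lin [MA gA_bound]] [gB_lin [MB gB_bound]]; split=> [x y k x_swc y_swc|].
  have [x1 y1] := (sigma_wc_fst x_swc, sigma_wc_fst y_swc).
  have [x2 y2] := (sigma_wc_snd x_swc, sigma_wc_snd y_swc).
  by rewrite /= gA_lin // gB_lin // mulrDr addrACA.
exists (`|MA| + `|MB|) => x x_swc; rewrite (le_trans (ler_normD _ _)) // mulrDl lerD //.
  have := gA_bound _ (sigma_wc_fst x_swc) => /(ler_normr_absM (dba_norm_ge0 hA _)).
  by move/le_trans; apply; rewrite ler_wpM2l.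
have := gB_bound _ (sigma_wc_snd x_swc) => /(ler_normr_absM (dba_norm_ge0 hB _)).
by move/le_trans; apply; rewrite ler_wpM2l.
Qed.

Variable D : A * B -> A * B -> K.
Hypothesis hD : is_derivation_dual nS mS D.

Let D_linr c : forall x y k, D c (x + k *: y) = D c x + k * D c y.
Proof. by case: hD => D_cl _ _ _; apply: cont_lin_linear (D_cl c). Qed.
Let D_linl c c' k x : D (c + k *: c') x = D c x + k * D c' x.
Proof. by case: hD. Qed.
Let D_leibniz c c' x : D (mS c c') x = D c (mS c' x) + D c' (mS x c).
Proof. by case: hD. Qed.
Let D_addl c c' x : D (c + c') x = D c x + D c' x.
Proof. by rewrite -[c']scale1r D_linl mul1r scale1r. Qed.
Let D_addr c x x' : D c (x + x') = D c x + D c x'.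
Proof. exact (linear_formD (D_linr c) x x'). Qed.
Let D0r c : D c (0, 0) = 0.
Proof. exact (linear_form0 (D_linr c)). Qed.

Lemma derivation_inl : is_derivation_dual nA mA (fun c x => D (c, 0) (x, 0)).
Proof.
case: hD => D_cl _ [M D_bound] _; split=> [c|c c' k x||c c' x].
- exact: cont_lin_inl nS_inl (D_cl (c, 0)).
- by rewrite pair_inl_lin D_linl.
- by exists M => c x; have := D_bound (c, 0) (x, 0); rewrite /= !nS_inl.
- by have := D_leibniz (c, 0) (c', 0) (x, 0); rewrite /= !(dba_mul0l hB).
Qed.

Lemma derivation_inr : is_derivation_dual nB mB (fun c x => D (0, c) (0, x)).
Proof.
case: hD => D_cl _ [M D_bound] _; split=> [c|c c' k x||c c' x].
- exact: cont_lin_inr nS_inr (D_cl (0, c)).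
- by rewrite pair_inr_lin D_linl.
- by exists M => c x; have := D_bound (0, c) (0, x); rewrite /= !nS_inr.
- by have := D_leibniz (0, c) (0, c') (0, x); rewrite /= !(dba_mul0l hA).
Qed.

Lemma derivation_sum_decomp c x :
  D c x = D (c.1, 0) (x.1, 0) + D (0, c.2) (0, x.2) + (D (c.1, 0) (0, x.2) + D (0, c.2) (x.1, 0)).
Proof.
have split_x c' : D c' x = D c' (x.1, 0) + D c' (0, x.2) by rewrite -D_addr -pair_split.
by rewrite {1}[c]pair_split D_addl !split_x [D (0, c.2) (x.1, 0) + _]addrC addrACA.
Qed.

Hypothesis hD_cont : weak_cont (wstar pS) (@wstar_swc K _ _ nS mS pS) (fun c => jA (D c)).

Let D_cont x : sigma_wc nS mS pS x -> forall c, weak_cont_at (wstar pS) (fun c => D c x) c.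
Proof. by move=> x_swc c; apply: (weak_contP _ _ _).1 hD_cont (exist _ x x_swc) c. Qed.

Lemma wstar_cont_derivation_inl :
  weak_cont (wstar pA) (@wstar_swc K _ _ nA mA pA) (fun c => jA (fun x => D (c, 0) (x, 0))).
Proof.
apply/weak_contP => x c.
exact (wstar_cont_at_inl (dba_pair0l hB) (D_cont (sigma_wc_inl (svalP x)) (c, 0))).
Qed.

Lemma wstar_cont_derivation_inr :
  weak_cont (wstar pB) (@wstar_swc K _ _ nB mB pB) (fun c => jA (fun x => D (0, c) (0, x))).
Proof.
apply/weak_contP => x c.
exact (wstar_cont_at_inr (dba_pair0l hA) (D_cont (sigma_wc_inr (svalP x)) (0, c))).
Qed.

Lemma derivation_inl_inr : square_wstar_dense mA pA ->
  forall a b, sigma_wc nB mB pB b -> D (a, 0) (0, b) = 0.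
Proof.
move=> dA a b b_swc; move: a; apply: (wstar_dense_square_eq0 dA) => [a|a a'|a a'].
- exact (wstar_cont_at_inl (dba_pair0l hB) (D_cont (sigma_wc_inr b_swc) (a, 0))).
- by rewrite pair_inlD D_addl.
- have := D_leibniz (a, 0) (a', 0) (0, b).
  by rewrite /= !(dba_mul0l hA, dba_mul0r hA, dba_mul0l hB, dba_mul0r hB) !D0r addr0.
Qed.

Lemma derivation_inr_inl : square_wstar_dense mB pB ->
  forall a b, sigma_wc nA mA pA a -> D (0, b) (a, 0) = 0.
Proof.
move=> dB a b a_swc; move: b; apply: (wstar_dense_square_eq0 dB) => [b|b b'|b b'].
- exact (wstar_cont_at_inr (dba_pair0l hA) (D_cont (sigma_wc_inl a_swc) (0, b))).
- by rewrite pair_inrD D_addl.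
- have := D_leibniz (0, b) (0, b') (a, 0).
  by rewrite /= !(dba_mul0l hA, dba_mul0r hA, dba_mul0l hB, dba_mul0r hB) !D0r addr0.
Qed.

End DerivationOnSum.

Lemma weakly_connes_amenable_sum (K : numFieldType)
    (A PA B PB : lmodType K) (nA : A -> K) (mA : A -> A -> A) (nPA : PA -> K)
    (pA : A -> PA -> K) (nB : B -> K) (mB : B -> B -> B) (nPB : PB -> K)
    (pB : B -> PB -> K) :
  (forall z : K, exists2 k, `|k| = 1 & k * z = `|z|) ->
  weakly_connes_amenable nA mA nPA pA -> weakly_connes_amenable nB mB nPB pB ->
  square_wstar_dense mA pA -> square_wstar_dense mB pB ->
  weakly_connes_amenable (fun x : A * B => nA x.1 + nB x.2)
    (fun x y : A * B => (mA x.1 y.1, mB x.2 y.2))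
    (fun p : PA * PB => Num.max (nPA p.1) (nPB p.2))
    (fun (x : A * B) (p : PA * PB) => pA x.1 p.1 + pB x.2 p.2).
Proof.
move=> phase [hA wcaA] [hB wcaB] dA dB; split; first exact: is_dual_banach_algebra_sum.
move=> D hD hD_cont.
have [gA [gA_cl gA_inner]] :=
  wcaA _ (derivation_inl hB hD) (wstar_cont_derivation_inl hB hD_cont).
have [gB [gB_cl gB_inner]] :=
  wcaB _ (derivation_inr hA hD) (wstar_cont_derivation_inr hA hD_cont).
exists (fun y => gA y.1 + gB y.2); split.
  exact (cont_lin_on_sigma_wc_sum hA hB gA_cl gB_cl).
move=> c x x_swc; have x1_swc := sigma_wc_fst hA hB x_swc.
have x2_swc := sigma_wc_snd hA hB x_swc.
rewrite (derivation_sum_decomp hD) (derivation_inl_inr hA hB hD hD_cont dA _ x2_swc).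
rewrite (derivation_inr_inl hA hB hD hD_cont dB _ x1_swc) !addr0 gA_inner // gB_inner //=.
by rewrite opprD addrACA.
Qed.

Lemma numClosed_phase (C : numClosedFieldType) (z : C) :
  exists2 k, `|k| = 1 & k * z = `|z|.
Proof.
have [->|z_neq0] := eqVneq z 0; first by exists 1; rewrite ?normr1 ?mulr0 ?normr0.
have nz_neq0 : `|z| != 0 by rewrite normr_eq0.
exists (z^* / `|z|); first by rewrite normrM normfV normr_id norm_conjC divff.
by rewrite mulrAC -normCKC expr2 mulfK.
Qed.

Local Open Scope complex_scope.

Theorem theorem3p15 (R : realType)
  (A PA : lmodType R[i]) (nA : A -> R[i]) (mA : A -> A -> A)
  (nPA : PA -> R[i]) (pA : A -> PA -> R[i])
  (B PB : lmodType R[i]) (nB : B -> R[i]) (mB : B -> B -> B)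
  (nPB : PB -> R[i]) (pB : B -> PB -> R[i]) :
  weakly_connes_amenable nA mA nPA pA ->
  weakly_connes_amenable nB mB nPB pB ->
  square_wstar_dense mA pA ->
  square_wstar_dense mB pB ->
  weakly_connes_amenable
    (fun x : A * B => nA x.1 + nB x.2)
    (fun x y : A * B => (mA x.1 y.1, mB x.2 y.2))
    (fun p : PA * PB => Num.max (nPA p.1) (nPB p.2))
    (fun (x : A * B) (p : PA * PB) => pA x.1 p.1 + pB x.2 p.2).
Proof. exact/weakly_connes_amenable_sum/numClosed_phase. Qed.
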